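(* For $p\in(0,1]$ let $\varphi(p)=\big(1-(3-2\sqrt2)p\big)^{\frac2p}\big(1-\frac p2\big)^{\frac2p-1}$. Then $\varphi$ is monotonically increasing on $(0,1]$. *)

From Stdlib Require Import Reals.
Open Scope R_scope.

(* phi(p) = (1 - (3 - 2 sqrt 2) p)^(2/p) * (1 - p/2)^(2/p - 1),
   both bases are positive for p in (0,1]. *)
Definition phi (p : R) : R :=
  Rpower (1 - (3 - 2 * sqrt 2) * p) (2 / p) * Rpower (1 - p / 2) (2 / p - 1).

(* Write [phi p = exp (L p)] with [L p = 2/p ln(1 - c p) + (2/p - 1) ln(1 - p/2)],
   [c = 3 - 2 sqrt 2].  Then [L' p = 2/p^2 g p] with
   [g p = - ln(1 - c p) - ln(1 - p/2) - c p/(1 - c p) - p/2], and [g 0 = 0],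
   [g' p = p ((1 - c p)^2 - 2 c^2 (2 - p)) / (2 (2 - p) (1 - c p)^2)].  The bracket
   is positive on (0,1] as soon as [0 <= c < 1/3], so [g > 0] and [L] increases. *)
From Stdlib Require Import Reals Lra.
From Coquelicot Require Import Coquelicot.
Open Scope R_scope.

Lemma increasing_of_derive_pos (f f' : R -> R) (a b : R) :
  a < b ->
  (forall x, a <= x <= b -> is_derive f x (f' x)) ->
  (forall x, a < x < b -> 0 < f' x) ->
  f a < f b.
Proof.
  intros Hab Hder Hpos.
  destruct (MVT_cor2 f f' a b) as [d [Hfd Hd]]; [lra| |].
  - intros x Hx. apply is_derive_Reals, Hder; lra.
  - assert (0 < f' d) by (apply Hpos; lra). nra.
Qed.

Section LogPhi.

Variable c : R.
Hypothesis c_range : 0 <= c < 1/3.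

Definition log_phi (p : R) : R :=
  2 / p * ln (1 - c * p) + (2 / p - 1) * ln (1 - p / 2).

Definition log_phi_slope (p : R) : R :=
  - ln (1 - c * p) - ln (1 - p / 2) - c * p / (1 - c * p) - p / 2.

Lemma log_phi_derive p : 0 < p <= 1 ->
  is_derive log_phi p (2 / p ^ 2 * log_phi_slope p).
Proof.
  intros Hp. unfold log_phi, log_phi_slope. auto_derive.
  - repeat split; try lra; nra.
  - unfold Rminus, Rdiv. field; split; try lra; nra.
Qed.

Lemma log_phi_slope_derive p : 0 <= p <= 1 ->
  is_derive log_phi_slope p (- c ^ 2 * p / (1 - c * p) ^ 2 + p / (2 * (2 - p))).
Proof.
  intros Hp. unfold log_phi_slope. auto_derive.
  - repeat split; try lra; nra.
  - field; split; try lra; nra.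
Qed.

Lemma log_phi_slope_derive_pos p : 0 < p <= 1 ->
  0 < - c ^ 2 * p / (1 - c * p) ^ 2 + p / (2 * (2 - p)).
Proof.
  intros Hp.
  (* [(1 - c p)^2 >= (1 - c)^2 > 4 c^2 >= 2 c^2 (2 - p)], using [c < 1/3]. *)
  assert (Hcp : 1 - c <= 1 - c * p) by nra.
  assert (Hbracket : 2 * c ^ 2 * (2 - p) < (1 - c * p) ^ 2) by nra.
  replace (- c ^ 2 * p / (1 - c * p) ^ 2 + p / (2 * (2 - p))) with
    (p * ((1 - c * p) ^ 2 - 2 * c ^ 2 * (2 - p)) / (2 * (2 - p) * (1 - c * p) ^ 2))
    by (field; split; lra).
  apply Rdiv_lt_0_compat; apply Rmult_lt_0_compat; nra.
Qed.

Lemma log_phi_slope_pos p : 0 < p <= 1 -> 0 < log_phi_slope p.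
Proof.
  intros Hp.
  assert (Hslope0 : log_phi_slope 0 = 0).
  { unfold log_phi_slope. rewrite !Rmult_0_r, !Rdiv_0_l, !Rminus_0_r, ln_1.
    ring. }
  rewrite <- Hslope0.
  apply (increasing_of_derive_pos log_phi_slope
    (fun x => - c ^ 2 * x / (1 - c * x) ^ 2 + x / (2 * (2 - x))) 0 p); try lra.
  - intros x Hx. apply log_phi_slope_derive; lra.
  - intros x Hx. apply log_phi_slope_derive_pos; lra.
Qed.

Lemma log_phi_increasing p q : 0 < p -> p < q -> q <= 1 -> log_phi p < log_phi q.
Proof.
  intros Hp Hpq Hq.
  apply (increasing_of_derive_pos log_phi (fun x => 2 / x ^ 2 * log_phi_slope x) p q Hpq).
  - intros x Hx. apply log_phi_derive; lra.
  - intros x Hx. apply Rmult_lt_0_compat.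
    + apply Rdiv_lt_0_compat; [lra | apply pow_lt; lra].
    + apply log_phi_slope_pos; lra.
Qed.

End LogPhi.

Lemma three_minus_two_sqrt2_range : 0 <= 3 - 2 * sqrt 2 < 1/3.
Proof.
  assert (Hsqrt : 4/3 < sqrt 2 < 3/2).
  { rewrite <- (sqrt_square (4/3)), <- (sqrt_square (3/2)) by lra.
    split; apply sqrt_lt_1; nra. }
  lra.
Qed.

Lemma phi_eq_exp_log_phi p : phi p = exp (log_phi (3 - 2 * sqrt 2) p).
Proof. unfold phi, Rpower, log_phi. rewrite exp_plus. reflexivity. Qed.

Theorem lemma11 : forall p q : R, 0 < p -> p < q -> q <= 1 -> phi p < phi q.
Proof.
  intros p q Hp Hpq Hq.
  rewrite !phi_eq_exp_log_phi.
  apply exp_increasing, log_phi_increasing; try lra.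
  exact three_minus_two_sqrt2_range.
Qed.
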